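(* Let $k\ge 2$ and $l\ge 1$ be integers. If there exists an abelian-$k$th-power-free infinite word over an alphabet of $l$ letters, then for every alphabet $\Sigma$ with $|\Sigma|=2l-1$ and every antimorphic involution $\theta$ on $\Sigma^*$, there exists an infinite word over $\Sigma$ that is pseudo-$k$th-power-free with respect to $\theta$.
   Context: For a word $w$ and letter $a$, $|w|_a$ is the number of occurrences of $a$ in $w$. A nonempty word $w$ is an abelian $k$th power if $w=u_1\cdots u_k$ with $|u_i|_a=|u_j|_a$ for all letters $a$ and all $1\le i,j\le k$; a word is abelian-$k$th-power-free if none of its factors (contiguous subwords) is an abelian $k$th power. A function $\theta:\Sigma^*\to\Sigma^*$ is an antimorphic involution if $\theta(uv)=\theta(v)\theta(u)$ and $\theta(\theta(w))=w$. A nonempty word $w$ is a pseudo $k$th power with respect to $\theta$ if $w=u_1\cdots u_k$ where for all $1\le i,j\le k$, $u_i=u_j$ or $u_i=\theta(u_j)$; a word is pseudo-$k$th-power-free if no factor of it is a pseudo $k$th power. *)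

From mathcomp Require Import all_boot.
Set Implicit Arguments. Unset Strict Implicit. Unset Printing Implicit Defensive.

Definition ifactor (T : Type) (w : nat -> T) (i n : nat) : seq T :=
  mkseq (fun j => w (i + j)) n.

Definition abelian_power (T : eqType) (k : nat) (w : seq T) : Prop :=
  w <> [::] /\
  exists us : seq (seq T),
    [/\ size us = k, flatten us = w &
        forall u v, u \in us -> v \in us -> forall a : T, count_mem a u = count_mem a v].

Definition abelian_power_free (T : eqType) (k : nat) (w : nat -> T) : Prop :=
  forall i n, ~ abelian_power k (ifactor w i n).

Definition antimorphic_involution (T : Type) (theta : seq T -> seq T) : Prop :=
  (forall u v, theta (u ++ v) = theta v ++ theta u) /\
  (forall u, theta (theta u) = u).

Definition pseudo_power (T : eqType) (theta : seq T -> seq T) (k : nat) (w : seq T) : Prop :=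
  w <> [::] /\
  exists us : seq (seq T),
    [/\ size us = k, flatten us = w &
        forall u v, u \in us -> v \in us -> u = v \/ u = theta v].

Definition pseudo_power_free (T : eqType) (theta : seq T -> seq T) (k : nat) (w : nat -> T) : Prop :=
  forall i n, ~ pseudo_power theta k (ifactor w i n).

(* An antimorphic involution is [theta s = rev (map f s)] for an involution [f]
   on letters.  Over an alphabet [A] containing no pair [x <> f x] of conjugate
   letters, [u] and [theta u] are permutations of each other, so every pseudo
   power is an abelian power.  Keeping one letter from each orbit of [f] gives
   such an [A] with at least [l] letters among [2l - 1]; an injection of the
   [l]-letter alphabet into [A] thus maps an abelian-power-free word to a
   pseudo-power-free one. *)

From mathcomp Require Import all_boot zify.

Set Implicit Arguments.
Unset Strict Implicit.
Unset Printing Implicit Defensive.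

Section AntimorphicInvolution.
Variables (T : eqType) (theta : seq T -> seq T).
Hypothesis theta_inv : antimorphic_involution theta.

Lemma theta_nil : theta [::] = [::].
Proof.
case: theta_inv => thetaM _; have := congr1 size (thetaM [::] [::]).
by rewrite /= size_cat; case: (theta [::]) => //= a s; lia.
Qed.

Lemma theta_eq_nil u : (theta u == [::]) = (u == [::]).
Proof.
case: theta_inv => _ thetaK; apply/eqP/eqP => [E|->]; last exact: theta_nil.
by rewrite -(thetaK u) E theta_nil.
Qed.

Lemma size_theta_letter x : size (theta [:: x]) = 1.
Proof.
case: theta_inv => thetaM thetaK.
have size_gt0 u : u != [::] -> 0 < size (theta u) by rewrite lt0n size_eq0 theta_eq_nil.
case E: (theta [:: x]) (size_gt0 [:: x] isT) => [//|y [//|z r]] _.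
have := congr1 size (thetaK [:: x]); rewrite E -cat1s thetaM size_cat /=.
by have := size_gt0 [:: y] isT; have := size_gt0 (z :: r) isT; lia.
Qed.

(* The action of [theta] on letters; the default of [head] is never used. *)
Definition theta_letter (x : T) : T := head x (theta [:: x]).

Local Notation f := theta_letter.

Lemma theta_letterE x : theta [:: x] = [:: f x].
Proof. by rewrite /f; have := size_theta_letter x; case: (theta [:: x]) => [|? []]. Qed.

Lemma thetaE s : theta s = rev (map f s).
Proof.
case: theta_inv => thetaM _; elim: s => [|x s IHs]; first by rewrite theta_nil.
by rewrite -cat1s thetaM IHs theta_letterE /= rev_cons cats1.
Qed.

Lemma theta_letterK : involutive f.
Proof. by case: theta_inv => _ thetaK x; have := thetaK [:: x]; rewrite !theta_letterE => -[]. Qed.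

Lemma count_theta a s : count_mem a (theta s) = count_mem (f a) s.
Proof.
rewrite thetaE count_rev count_map; apply: eq_count => y /=.
by apply/eqP/eqP => [<-|->]; rewrite theta_letterK.
Qed.

Definition no_conjugate_pairs (A : {pred T}) : Prop :=
  {in A, forall x, f x \in A -> f x = x}.

Lemma count_mem_notin a (A : {pred T}) u : {subset u <= A} -> a \notin A -> count_mem a u = 0.
Proof.
move=> uA aNA; apply/count_memPn; apply: contra aNA; exact: uA.
Qed.

Lemma perm_theta (A : {pred T}) u :
  no_conjugate_pairs A -> {subset u <= A} -> {subset theta u <= A} ->
  perm_eq u (theta u).
Proof.
move=> noA uA thuA; apply/allP => a _ /=; apply/eqP.
have [aA|aNA] := boolP (a \in A); last by rewrite !(count_mem_notin _ aNA).
rewrite count_theta; have [->//|fa_ne] := eqVneq (f a) a.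
have faNA : f a \notin A by apply: contra fa_ne => faA; apply/eqP; exact: noA.
(* [a] occurs in [u] as often as [f a] occurs in [theta u], i.e. never. *)
by rewrite -[in LHS](theta_letterK a) -count_theta !(count_mem_notin _ faNA).
Qed.

Lemma pseudo_power_abelian (A : {pred T}) k w :
  no_conjugate_pairs A -> {subset w <= A} ->
  pseudo_power theta k w -> abelian_power k w.
Proof.
move=> noA wA [w_ne [us [size_us flat_us us_rel]]]; split=> //.
exists us; split=> // u v u_us v_us.
suff /permP uv : perm_eq u v by move=> a; apply: uv.
have blockA s : s \in us -> {subset s <= A}.
  by move=> s_us x xs; apply: wA; rewrite -flat_us; apply/flattenP; exists s.
case: (us_rel u v u_us v_us) => [->|u_eq]; first exact: perm_refl.
rewrite u_eq perm_sym; apply: (perm_theta noA (blockA _ v_us)).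
by rewrite -u_eq; apply: blockA.
Qed.

End AntimorphicInvolution.

Lemma abelian_power_map_inj (T S : eqType) (g : T -> S) k s :
  injective g -> abelian_power k (map g s) -> abelian_power k s.
Proof.
move=> g_inj [gs_ne [us [size_us flat_us us_abel]]]; split.
  by move=> s_nil; apply: gs_ne; rewrite s_nil.
have us_map : map (map g) (reshape (shape us) s) = us.
  by rewrite map_reshape -flat_us flattenK.
exists (reshape (shape us) s); split.
- by rewrite size_reshape size_map.
- by apply: reshapeKr; rewrite -size_flatten -(size_map g) -flat_us.
move=> u v u_in v_in.
suff /permP uv : perm_eq u v by move=> a; apply: uv.
apply: (perm_map_inj g_inj); apply/allP => b _; apply/eqP.
by apply: us_abel; rewrite -us_map map_f.
Qed.

Lemma exists_no_conjugate_pairs (T : finType) (theta : seq T -> seq T) :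
  antimorphic_involution theta ->
  exists A : {set T}, no_conjugate_pairs theta (mem A) /\ #|T| <= #|A|.*2.
Proof.
move=> theta_inv; pose f := theta_letter theta.
have fK : involutive f by apply: theta_letterK.
(* Keep the letter of smaller rank in each orbit; [f] maps the others into [A]. *)
exists [set x | enum_rank x <= enum_rank (f x)]; split.
  move=> x; rewrite !inE fK => le_x le_fx.
  by apply: enum_rank_inj; apply: val_inj; apply/eqP; rewrite eqn_leq le_fx le_x.
set A := [set _ | _].
have sub : f @: (~: A) \subset A.
  apply/subsetP => _ /imsetP [x xNA ->].
  by move: xNA; rewrite !inE -ltnNge fK => /ltnW.
have := subset_leq_card sub; rewrite card_imset; last exact: can_inj fK.
by have := cardsC A; lia.
Qed.

Theorem mainTheorem13 (k l : nat) (hk : 2 <= k) (hl : 1 <= l) :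
  (exists w : nat -> 'I_l, abelian_power_free k w) ->
  forall (Sigma : finType), #|Sigma| = 2 * l - 1 ->
  forall theta : seq Sigma -> seq Sigma, antimorphic_involution theta ->
  exists w : nat -> Sigma, pseudo_power_free theta k w.
Proof.
move=> [w w_free] Sigma card_Sigma theta theta_inv.
have [A [noA card_A]] := exists_no_conjugate_pairs theta_inv.
have l_le_A : l <= #|A| by lia.
pose g (a : 'I_l) : Sigma := enum_val (widen_ord l_le_A a).
have g_inj : injective g by move=> a b /enum_val_inj /(congr1 val) /= /val_inj.
exists (g \o w) => i n; apply: contra_not (w_free i n).
have -> : ifactor (g \o w) i n = map g (ifactor w i n) by rewrite /ifactor /mkseq -map_comp.
move=> gw_pseudo; apply: (abelian_power_map_inj g_inj).
apply: (pseudo_power_abelian theta_inv noA _ gw_pseudo).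
by move=> _ /mapP [j _ ->]; apply: enum_valP.
Qed.
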